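(* Let $\lambda\in\mathbb R$. The connected Lie subgroups of dimension two of $S_{3,\lambda}$ are exactly the following: (i) $\mathcal K_0=\{(x,y,0):x,y\in\mathbb R\}$, with Lie algebra $\operatorname{span}\{E_1,E_2\}$ (abelian); (ii) if $\lambda\neq0$: for each $a\in\mathbb R$, $\mathcal J_a=\{(x,\tfrac{e^{\lambda z}-1}{\lambda}a,z):x,z\in\mathbb R\}$, with Lie algebra $\operatorname{span}\{E_3+aE_2,E_1\}$, which is solvable and non-abelian; (iii) if $\lambda=0$: for each $a\in\mathbb R$, $\mathcal J_a=\{(x,az,z):x,z\in\mathbb R\}$, with Lie algebra $\operatorname{span}\{E_3+aE_2,E_1\}$, which is abelian.
   Context: For $\lambda\in\mathbb R$, $S_{3,\lambda}$ is $\mathbb R^3=\{(x,y,z)\}$ with product $(v_1,z_1)(v_2,z_2)=(v_1+M_{\lambda,z_1}v_2,\,z_1+z_2)$, where $v_i=(x_i,y_i)\in\mathbb R^2$ and $M_{\lambda,z}=\begin{pmatrix}e^{\lambda z}& ze^{\lambda z}\\ 0& e^{\lambda z}\end{pmatrix}$. Its Lie algebra $\mathfrak r_{3,\lambda}$ has basis of left-invariant vector fields $E_1=e^{\lambda z}\partial_x$, $E_2=ze^{\lambda z}\partial_x+e^{\lambda z}\partial_y$, $E_3=\partial_z$, with nonzero brackets $[E_3,E_1]=\lambda E_1$, $[E_3,E_2]=E_1+\lambda E_2$ ($\lambda=0$ gives the Heisenberg group). *)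

From Stdlib Require Import Reals Lra.
From Coquelicot Require Import Coquelicot.
Open Scope R_scope.

Definition pt := (R * R * R)%type.

Definition px (p : pt) : R := fst (fst p).
Definition py (p : pt) : R := snd (fst p).
Definition pz (p : pt) : R := snd p.

(* Group law: (v1,z1)(v2,z2) = (v1 + M_{lam,z1} v2, z1+z2),
   M_{lam,z} = [[e^{lam z}, z e^{lam z}],[0, e^{lam z}]]. *)
Definition gmul (lam : R) (p q : pt) : pt :=
  (px p + exp (lam * pz p) * px q + pz p * exp (lam * pz p) * py q,
   py p + exp (lam * pz p) * py q,
   pz p + pz q).

Definition gone : pt := (0, 0, 0).

(* Inverse: (v,z)^{-1} = (- M_{lam,-z} v, -z). *)
Definition ginv (lam : R) (p : pt) : pt :=
  (- (exp (- lam * pz p) * px p - pz p * exp (- lam * pz p) * py p),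
   - (exp (- lam * pz p) * py p),
   - pz p).

Definition pset := pt -> Prop.

Definition same_set (A B : pset) : Prop := forall p, A p <-> B p.

Definition is_subgroup (lam : R) (K : pset) : Prop :=
  K gone /\ (forall p q, K p -> K q -> K (gmul lam p q)) /\
  (forall p, K p -> K (ginv lam p)).

Definition gen_subgroup (lam : R) (S : pset) : pset :=
  fun g => forall K, is_subgroup lam K -> (forall s, S s -> K s) -> K g.

(* Lie algebra r_{3,lam}: an element c1 LE1 + c2 LE2 + c3 LE3 is encoded by its
   coefficient triple (c1,c2,c3); since LE1,LE2,LE3 at the identity are
   d/dx, d/dy, d/dz, this triple is also its value at the identity. *)
Definition lvec := (R * R * R)%type.
Definition c1 (v : lvec) : R := fst (fst v).
Definition c2 (v : lvec) : R := snd (fst v).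
Definition c3 (v : lvec) : R := snd v.

Definition LE1 : lvec := (1, 0, 0).
Definition LE2 : lvec := (0, 1, 0).
Definition LE3 : lvec := (0, 0, 1).

Definition ladd (u v : lvec) : lvec := (c1 u + c1 v, c2 u + c2 v, c3 u + c3 v).
Definition lscal (a : R) (v : lvec) : lvec := (a * c1 v, a * c2 v, a * c3 v).
Definition lzero : lvec := (0, 0, 0).

(* Bracket determined by bilinearity, antisymmetry and
   [LE3,LE1] = lam LE1, [LE3,LE2] = LE1 + lam LE2, [LE1,LE2] = 0. *)
Definition lbr (lam : R) (X Y : lvec) : lvec :=
  (lam * (c3 X * c1 Y - c3 Y * c1 X) + (c3 X * c2 Y - c3 Y * c2 X),
   lam * (c3 X * c2 Y - c3 Y * c2 X),
   0).

Definition span2 (u v : lvec) : lvec -> Prop :=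
  fun w => exists a b : R, w = ladd (lscal a u) (lscal b v).

Definition lin_indep2 (u v : lvec) : Prop :=
  forall a b : R, ladd (lscal a u) (lscal b v) = lzero -> a = 0 /\ b = 0.

Definition same_sub (h k : lvec -> Prop) : Prop := forall w, h w <-> k w.

Definition subalg2 (lam : R) (h : lvec -> Prop) : Prop :=
  (exists u v, lin_indep2 u v /\ same_sub h (span2 u v)) /\
  (forall X Y, h X -> h Y -> h (lbr lam X Y)).

Definition abelian_sub (lam : R) (h : lvec -> Prop) : Prop :=
  forall X Y, h X -> h Y -> lbr lam X Y = lzero.

(* solvable: the derived algebra [h,h] is abelian (derived series reaches 0
   in two steps) *)
Definition solvable_sub (lam : R) (h : lvec -> Prop) : Prop :=
  forall X Y Z W, h X -> h Y -> h Z -> h W ->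
    lbr lam (lbr lam X Y) (lbr lam Z W) = lzero.

(* One-parameter subgroup of S_{3,lam} with initial velocity v
   (= value at the identity of the left-invariant field v). *)
Definition one_param (lam : R) (v : lvec) (g : R -> pt) : Prop :=
  (forall s t, g (s + t) = gmul lam (g s) (g t)) /\
  is_derive (fun t => px (g t)) 0 (c1 v) /\
  is_derive (fun t => py (g t)) 0 (c2 v) /\
  is_derive (fun t => pz (g t)) 0 (c3 v).

(* The connected Lie subgroup (integral subgroup) with Lie algebra h:
   the subgroup generated by exp(h), i.e. by all one-parameter subgroups
   with velocity in h. *)
Definition integral_subgroup (lam : R) (h : lvec -> Prop) : pset :=
  gen_subgroup lam
    (fun p => exists v g t, h v /\ one_param lam v g /\ p = g t).

Definition conn_lie_subgroup2 (lam : R) (h : lvec -> Prop) (H : pset) : Prop :=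
  subalg2 lam h /\ same_set H (integral_subgroup lam h).

Definition K0 : pset := fun p => pz p = 0.

Definition Jset (lam a : R) : pset := fun p =>
  (lam <> 0 /\ py p = (exp (lam * pz p) - 1) / lam * a) \/
  (lam = 0 /\ py p = a * pz p).

(* A two-dimensional subalgebra either lies in the abelian ideal span{E1, E2}, or
   contains a vector X with E3-coefficient 1 and meets span{E1, E2} in a line L.
   Closure under [X, _] makes L an eigenline of ad X on span{E1, E2}; there ad X is
   the Jordan block [[lam, 1], [0, lam]], so L = R E1 and the subalgebra is
   span{E3 + a E2, E1}.

   On the group side, a one-parameter subgroup with velocity v has z = c3 v * t and
   y' = exp (lam * z) * c2 v, so those with velocity in the subalgebra stay in the
   subgroup K0 or J_a. Conversely each point of J_a is a point on the flow of
   E3 + a E2 times a point on the x-axis, and each point of K0 is on a horizontal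
   line through the identity. *)

From Pilot Require Import Defs.
From Stdlib Require Import Reals Lra.
From Coquelicot Require Import Coquelicot.
Open Scope R_scope.

(* Coquelicot also exports a [c1], hence the qualified [Defs.c1] throughout. *)
Lemma lvec_eq (u v : lvec) : Defs.c1 u = Defs.c1 v -> c2 u = c2 v -> c3 u = c3 v -> u = v.
Proof. destruct u as [[? ?] ?], v as [[? ?] ?]; cbn; intros -> -> ->; reflexivity. Qed.

Lemma pt_eq (p q : pt) : px p = px q -> py p = py q -> pz p = pz q -> p = q.
Proof. exact (lvec_eq p q). Qed.

Definition j_vec (a : R) : lvec := ladd LE3 (lscal a LE2).
Definition k_alg : lvec -> Prop := span2 LE1 LE2.
Definition j_alg (a : R) : lvec -> Prop := span2 (j_vec a) LE1.

Lemma eq_of_same_derive (f g df : R -> R) :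
  (forall t, is_derive f t (df t)) -> (forall t, is_derive g t (df t)) ->
  f 0 = g 0 -> forall t, f t = g t.
Proof.
  intros Hf Hg H0 t.
  assert (Hd : forall s, is_derive (fun s => f s - g s) s 0).
  { intro s. assert (H := is_derive_minus f g s _ _ (Hf s) (Hg s)).
    rewrite minus_eq_zero in H. exact H. }
  assert (Hc : f t - g t = f 0 - g 0).
  { destruct (Rtotal_order t 0) as [Hlt|[->|Hgt]].
    - apply (eq_is_derive (fun s => f s - g s)); [intros; apply Hd | lra].
    - reflexivity.
    - symmetry. apply (eq_is_derive (fun s => f s - g s)); [intros; apply Hd | lra]. }
  lra.
Qed.

(* Near [s], [f x = f s + k s * f (x - s)]. *)
Lemma is_derive_twisted_additive (f k : R -> R) c s :
  (forall s t, f (s + t) = f s + k s * f t) -> is_derive f 0 c -> is_derive f s (k s * c).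
Proof.
  intros Hf Hd.
  apply is_derive_ext with (f := fun x => f s + k s * f (x - s)).
  { intro t. rewrite <- Hf. f_equal. ring. }
  assert (Hd' : is_derive f (s - s) c) by (replace (s - s) with 0 by ring; exact Hd).
  assert (Hshift : is_derive (fun x => x - s) s 1) by (auto_derive; [exact I | ring]).
  assert (H := is_derive_plus _ _ s _ _ (is_derive_const (f s) s)
                 (is_derive_scal _ s (k s) _
                    (is_derive_comp f (fun x => x - s) s c 1 Hd' Hshift))).
  rewrite plus_zero_l in H. change (scal 1 c) with (1 * c) in H.
  rewrite Rmult_1_l in H. exact H.
Qed.

(** * One-parameter subgroups *)

Section OneParam.

Variables (lam : R) (v : lvec) (g : R -> pt).
Hypothesis Hg : one_param lam v g.

Lemma one_param_0 : g 0 = gone.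
Proof.
  destruct Hg as [Hmul _].
  assert (E := Hmul 0 0). rewrite Rplus_0_r in E.
  assert (Ez := f_equal pz E). cbn in Ez.
  assert (Hz : pz (g 0) = 0) by lra.
  assert (Ey := f_equal py E). cbn in Ey. rewrite Hz, Rmult_0_r, exp_0 in Ey.
  assert (Hy : py (g 0) = 0) by lra.
  assert (Ex := f_equal px E). cbn in Ex. rewrite Hz, Hy, Rmult_0_r, exp_0 in Ex.
  apply pt_eq; cbn; lra.
Qed.

Lemma one_param_pz t : pz (g t) = c3 v * t.
Proof.
  destruct Hg as [Hmul [_ [_ Hz]]].
  revert t. apply (eq_of_same_derive _ _ (fun _ => c3 v)).
  - intro s. rewrite <- (Rmult_1_l (c3 v)).
    apply (is_derive_twisted_additive _ (fun _ => 1)); auto.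
    intros a b. rewrite Hmul. cbn. ring.
  - intro s. auto_derive; [exact I | ring].
  - rewrite one_param_0. cbn. ring.
Qed.

Lemma one_param_py_derive s :
  is_derive (fun t => py (g t)) s (exp (lam * (c3 v * s)) * c2 v).
Proof.
  destruct Hg as [Hmul [_ [Hy _]]].
  rewrite <- one_param_pz.
  apply (is_derive_twisted_additive _ (fun s => exp (lam * pz (g s)))); auto.
  intros a b. rewrite Hmul. reflexivity.
Qed.

End OneParam.

Lemma one_param_horizontal lam x y :
  one_param lam ((x, y), 0) (fun t => ((t * x, t * y), 0)).
Proof.
  split; [|split; [|split]]; cbn.
  - intros s t. apply pt_eq; cbn; rewrite ?Rmult_0_r, ?exp_0; ring.
  - auto_derive; [exact I | ring].
  - auto_derive; [exact I | ring].
  - auto_derive; [exact I | ring].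
Qed.

Lemma one_param_j_vec lam a : lam <> 0 ->
  one_param lam (j_vec a)
    (fun t => ((a * (t * exp (lam * t) / lam - (exp (lam * t) - 1) / (lam * lam)),
                (exp (lam * t) - 1) / lam * a), t)).
Proof.
  intro Hl. split; [|split; [|split]]; cbn.
  - intros s t. apply pt_eq; cbn; rewrite ?Rmult_plus_distr_l, ?exp_plus; field; auto.
  - auto_derive; repeat split; auto. rewrite !Rmult_0_r, exp_0. field. auto.
  - auto_derive; repeat split; auto. rewrite !Rmult_0_r, exp_0. field. auto.
  - auto_derive; [exact I | ring].
Qed.

Lemma one_param_j_vec_lam0 a :
  one_param 0 (j_vec a) (fun t => ((a * t * t / 2, a * t), t)).
Proof.
  split; [|split; [|split]]; cbn.
  - intros s t. apply pt_eq; cbn; rewrite ?Rmult_0_l, ?exp_0; field.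
  - auto_derive; [exact I | ring].
  - auto_derive; [exact I | ring].
  - auto_derive; [exact I | ring].
Qed.

(** * Integral subgroups *)

Lemma gen_subgroup_is_subgroup lam S : is_subgroup lam (gen_subgroup lam S).
Proof.
  repeat split.
  - intros K [HK _] _. exact HK.
  - intros p q Hp Hq K HK HS. apply HK; [apply Hp | apply Hq]; assumption.
  - intros p Hp K HK HS. apply HK. apply Hp; assumption.
Qed.

Lemma integral_subgroup_one_param lam h v g t :
  h v -> one_param lam v g -> integral_subgroup lam h (g t).
Proof. intros Hv Hg K _ HS. apply HS. exists v, g, t. auto. Qed.

Lemma integral_subgroup_min lam h (K : pset) :
  is_subgroup lam K -> (forall v g t, h v -> one_param lam v g -> K (g t)) ->
  forall p, integral_subgroup lam h p -> K p.
Proof.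
  intros HK Hflow p Hp. apply Hp; auto.
  intros s [v [g [t [Hv [Hg ->]]]]]. eauto.
Qed.

Lemma same_set_trans (A B C : pset) : same_set A B -> same_set B C -> same_set A C.
Proof. intros HAB HBC p. rewrite (HAB p). apply HBC. Qed.

Lemma integral_subgroup_same_sub lam h h' :
  same_sub h h' -> same_set (integral_subgroup lam h) (integral_subgroup lam h').
Proof.
  intros Hs p; split; apply integral_subgroup_min; try apply gen_subgroup_is_subgroup;
    intros v g t Hv Hg; apply (integral_subgroup_one_param _ _ v); auto; apply Hs; auto.
Qed.

Lemma K0_subgroup lam : is_subgroup lam K0.
Proof.
  unfold K0; repeat split; cbn.
  - intros p q Hp Hq. rewrite Hp, Hq. ring.
  - intros p Hp. rewrite Hp. ring.
Qed.

Lemma Jset_subgroup lam a : is_subgroup lam (Jset lam a).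
Proof.
  unfold Jset; repeat split; cbn.
  - destruct (Req_dec lam 0) as [->|Hl]; [right; split; auto; ring | left; split; auto].
    rewrite Rmult_0_r, exp_0. field. auto.
  - intros p q [[Hl Hp]|[Hl Hp]] [[Hl' Hq]|[Hl' Hq]]; try (subst; contradiction).
    + left. split; auto. rewrite Hp, Hq, Rmult_plus_distr_l, exp_plus. field. auto.
    + right. split; auto. rewrite Hp, Hq. subst lam. rewrite Rmult_0_l, exp_0. ring.
  - intros p [[Hl Hp]|[Hl Hp]].
    + left. split; auto. rewrite Hp.
      replace (lam * - pz p) with (- (lam * pz p)) by ring.
      replace (- lam * pz p) with (- (lam * pz p)) by ring.
      rewrite exp_Ropp. field. split; auto. apply Rgt_not_eq, exp_pos.
    + right. split; auto. rewrite Hp. subst lam. rewrite Ropp_0, Rmult_0_l, exp_0. ring.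
Qed.

Lemma gmul_x_axis lam q x :
  gmul lam q (((x - px q) / exp (lam * pz q), 0), 0) = ((x, py q), pz q).
Proof. apply pt_eq; cbn; [field; apply Rgt_not_eq, exp_pos | ring | ring]. Qed.

Lemma integral_subgroup_horizontal lam h x y :
  h ((x, y), 0) -> integral_subgroup lam h ((x, y), 0).
Proof.
  intro Hv.
  replace ((x, y), 0) with ((1 * x, 1 * y), 0) by (apply pt_eq; cbn; ring).
  exact (integral_subgroup_one_param lam h _ _ 1 Hv (one_param_horizontal lam x y)).
Qed.

Lemma integral_subgroup_k_alg lam : same_set (integral_subgroup lam k_alg) K0.
Proof.
  intro p; split.
  - apply integral_subgroup_min; [apply K0_subgroup|].
    intros v g t [a [b ->]] Hg. unfold K0. rewrite (one_param_pz _ _ _ Hg). cbn. ring.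
  - destruct p as [[x y] z]. unfold K0; cbn. intros ->.
    apply integral_subgroup_horizontal. exists x, y. apply lvec_eq; cbn; ring.
Qed.

Lemma j_alg_c2 a v : j_alg a v -> c2 v = a * c3 v.
Proof. intros [al [be ->]]. cbn. ring. Qed.

Lemma one_param_j_alg_Jset lam a v g t :
  j_alg a v -> one_param lam v g -> Jset lam a (g t).
Proof.
  intros Hv Hg. unfold Jset. rewrite (one_param_pz _ _ _ Hg).
  assert (Hpy := one_param_py_derive _ _ _ Hg).
  assert (Hpy0 : py (g 0) = 0) by (rewrite (one_param_0 _ _ _ Hg); reflexivity).
  rewrite (j_alg_c2 _ _ Hv) in Hpy.
  destruct (Req_dec lam 0) as [Hl|Hl]; [right | left]; split; auto;
    revert t; apply (eq_of_same_derive _ _ _ Hpy).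
  - intro s. subst lam. auto_derive; [exact I | rewrite Rmult_0_l, exp_0; ring].
  - rewrite Hpy0. ring.
  - intro s. auto_derive; [exact I | field; exact Hl].
  - rewrite Hpy0, !Rmult_0_r, exp_0. field. exact Hl.
Qed.

Lemma integral_subgroup_j_alg_fibre lam a G x z :
  one_param lam (j_vec a) G -> integral_subgroup lam (j_alg a) ((x, py (G z)), pz (G z)).
Proof.
  intro HG. rewrite <- (gmul_x_axis lam). apply gen_subgroup_is_subgroup.
  - apply (integral_subgroup_one_param _ _ (j_vec a)); auto.
    exists 1, 0. apply lvec_eq; cbn; ring.
  - apply integral_subgroup_horizontal. exists 0, ((x - px (G z)) / exp (lam * pz (G z))).
    apply lvec_eq; cbn; ring.
Qed.

Lemma integral_subgroup_j_alg lam a : same_set (integral_subgroup lam (j_alg a)) (Jset lam a).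
Proof.
  intro p; split.
  - apply integral_subgroup_min; [apply Jset_subgroup|].
    intros v g t Hv Hg. exact (one_param_j_alg_Jset _ _ _ _ _ Hv Hg).
  - destruct p as [[x y] z]. unfold Jset; cbn. intros [[Hl ->]|[-> ->]].
    + exact (integral_subgroup_j_alg_fibre _ _ _ x z (one_param_j_vec lam a Hl)).
    + exact (integral_subgroup_j_alg_fibre _ _ _ x z (one_param_j_vec_lam0 a)).
Qed.

(** * Two-dimensional subalgebras *)

Lemma same_sub_trans (h1 h2 h3 : lvec -> Prop) :
  same_sub h1 h2 -> same_sub h2 h3 -> same_sub h1 h3.
Proof. intros H12 H23 w. rewrite (H12 w). apply H23. Qed.

Lemma span2_trans u v u' v' :
  span2 u v u' -> span2 u v v' -> forall w, span2 u' v' w -> span2 u v w.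
Proof.
  intros [a [b ->]] [c [d ->]] w [e [f ->]].
  exists (e * a + f * c), (e * b + f * d). apply lvec_eq; cbn; ring.
Qed.

Lemma span2_same u v u' v' :
  span2 u v u' -> span2 u v v' -> span2 u' v' u -> span2 u' v' v ->
  same_sub (span2 u v) (span2 u' v').
Proof. intros; split; apply span2_trans; assumption. Qed.

Lemma span2_comm u v : same_sub (span2 u v) (span2 v u).
Proof.
  apply span2_same; [exists 0, 1 | exists 1, 0 | exists 0, 1 | exists 1, 0];
    apply lvec_eq; cbn; ring.
Qed.

Lemma lin_indep2_comm u v : lin_indep2 u v -> lin_indep2 v u.
Proof.
  intros H a b E. destruct (H b a) as [Hb Ha]; [|auto].
  rewrite <- E. apply lvec_eq; cbn; ring.
Qed.

Lemma lbr_horizontal lam X Y : c3 X = 0 -> c3 Y = 0 -> lbr lam X Y = lzero.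
Proof. intros HX HY. apply lvec_eq; cbn; rewrite ?HX, ?HY; ring. Qed.

Lemma lbr_lbr_lbr_eq0 lam X Y Z W : lbr lam (lbr lam X Y) (lbr lam Z W) = lzero.
Proof. apply lbr_horizontal; reflexivity. Qed.

(* [ad X] acts on [span{E1, E2}] by the Jordan block [[lam, 1], [0, lam]], whose
   only eigenline is [R E1]. *)
Lemma lbr_closed_span2_c2_eq0 lam X Y :
  c3 X = 1 -> c3 Y = 0 -> span2 X Y (lbr lam X Y) -> c2 Y = 0.
Proof.
  intros HX HY [A [B E]].
  assert (E1 := f_equal Defs.c1 E). assert (E2 := f_equal c2 E). assert (E3 := f_equal c3 E).
  cbn in E1, E2, E3. rewrite HX, HY in E1, E2, E3.
  assert (HA : A = 0) by lra. subst A.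
  assert (F1 : lam * Defs.c1 Y + c2 Y - B * Defs.c1 Y = 0) by lra.
  assert (F2 : lam * c2 Y - B * c2 Y = 0) by lra.
  assert (Hsq : c2 Y * c2 Y = c2 Y * (lam * Defs.c1 Y + c2 Y - B * Defs.c1 Y)
                              - Defs.c1 Y * (lam * c2 Y - B * c2 Y)) by ring.
  rewrite F1, F2 in Hsq. nra.
Qed.

Lemma horizontal_span2 u v :
  lin_indep2 u v -> c3 u = 0 -> c3 v = 0 -> same_sub (span2 u v) k_alg.
Proof.
  intros Hind Hu Hv.
  set (d := Defs.c1 u * c2 v - c2 u * Defs.c1 v).
  assert (Hd : d <> 0).
  { intro Hd. unfold d in Hd.
    destruct (Hind (c2 v) (- c2 u)) as [Hv2 Hu2]; [apply lvec_eq; cbn; rewrite ?Hu, ?Hv; lra|].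
    destruct (Hind (Defs.c1 v) (- Defs.c1 u)) as [Hv1 Hu1];
      [apply lvec_eq; cbn; rewrite ?Hu, ?Hv; lra|].
    destruct (Hind 1 0) as [H10 _]; [apply lvec_eq; cbn; rewrite ?Hu; lra | lra]. }
  apply span2_same.
  - exists (c2 v / d), (- c2 u / d).
    apply lvec_eq; cbn; rewrite ?Hu, ?Hv; unfold d; field; auto.
  - exists (- Defs.c1 v / d), (Defs.c1 u / d).
    apply lvec_eq; cbn; rewrite ?Hu, ?Hv; unfold d; field; auto.
  - exists (Defs.c1 u), (c2 u). apply lvec_eq; cbn; rewrite ?Hu; ring.
  - exists (Defs.c1 v), (c2 v). apply lvec_eq; cbn; rewrite ?Hv; ring.
Qed.

Lemma transversal_span2 lam u v :
  c3 u <> 0 -> lin_indep2 u v ->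
  (forall X Y, span2 u v X -> span2 u v Y -> span2 u v (lbr lam X Y)) ->
  same_sub (span2 u v) (j_alg (c2 u / c3 u)).
Proof.
  intros Hu Hind Hcl.
  set (X := lscal (/ c3 u) u). set (Y := ladd v (lscal (- (c3 v / c3 u)) u)).
  assert (HX : span2 u v X) by (exists (/ c3 u), 0; apply lvec_eq; cbn; ring).
  assert (HY : span2 u v Y) by (exists (- (c3 v / c3 u)), 1; apply lvec_eq; cbn; ring).
  assert (HXY : forall w, span2 u v w -> span2 X Y w).
  { apply span2_trans; [exists (c3 u), 0 | exists (c3 v), 1];
      apply lvec_eq; cbn; field; exact Hu. }
  assert (HY2 : c2 Y = 0).
  { apply (lbr_closed_span2_c2_eq0 lam X); [cbn; field; exact Hu | cbn; field; exact Hu |].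
    apply HXY, Hcl; assumption. }
  assert (HY1 : Defs.c1 Y <> 0).
  { intro HY1. destruct (Hind (- (c3 v / c3 u)) 1) as [_ H10]; [|lra].
    apply lvec_eq; cbn in *; [lra | lra | field; exact Hu]. }
  set (y1 := Defs.c1 Y) in HY1.
  assert (Hv1 : Defs.c1 v = y1 + c3 v / c3 u * Defs.c1 u) by (unfold y1, Y; cbn; ring).
  assert (Hv2 : c2 v = c3 v / c3 u * c2 u) by (unfold Y in HY2; cbn in HY2; lra).
  clearbody y1.
  (* [j_vec a = X - (c1 X / y1) Y] and [LE1 = Y / y1], expanded in terms of [u] and [v]. *)
  apply span2_same.
  - exists ((1 + Defs.c1 u * c3 v / (c3 u * y1)) / c3 u), (- Defs.c1 u / (c3 u * y1)).
    apply lvec_eq; cbn; rewrite ?Hv1, ?Hv2; field; auto.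
  - exists (- c3 v / (c3 u * y1)), (/ y1).
    apply lvec_eq; cbn; rewrite ?Hv1, ?Hv2; field; auto.
  - exists (c3 u), (Defs.c1 u). apply lvec_eq; cbn; field; exact Hu.
  - exists (c3 v), (Defs.c1 v). apply lvec_eq; cbn; rewrite ?Hv2; field; exact Hu.
Qed.

Lemma subalg2_classification lam h :
  subalg2 lam h -> same_sub h k_alg \/ exists a, same_sub h (j_alg a).
Proof.
  intros [[u [v [Hind Hh]]] Hcl].
  assert (Hcl_uv : forall X Y, span2 u v X -> span2 u v Y -> span2 u v (lbr lam X Y)).
  { intros X Y HX HY. apply Hh, Hcl; apply Hh; assumption. }
  destruct (Req_dec (c3 u) 0) as [Hu|Hu]; [destruct (Req_dec (c3 v) 0) as [Hv|Hv]|].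
  - left. apply (same_sub_trans _ _ _ Hh), horizontal_span2; assumption.
  - right. exists (c2 v / c3 v).
    apply (same_sub_trans _ _ _ Hh), (same_sub_trans _ _ _ (span2_comm u v)).
    apply (transversal_span2 lam); [exact Hv | apply lin_indep2_comm; exact Hind |].
    intros X Y HX HY. apply span2_comm, Hcl_uv; apply span2_comm; assumption.
  - right. exists (c2 u / c3 u).
    apply (same_sub_trans _ _ _ Hh), (transversal_span2 lam); assumption.
Qed.

Lemma subalg2_k_alg lam : subalg2 lam k_alg.
Proof.
  split.
  - exists LE1, LE2. split; [|intro; reflexivity].
    intros a b E. split; [apply (f_equal Defs.c1) in E | apply (f_equal c2) in E];
      cbn in E; lra.
  - intros X Y [a [b ->]] [c [d ->]]. exists 0, 0.
    rewrite lbr_horizontal by (cbn; ring). apply lvec_eq; cbn; ring.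
Qed.

Lemma subalg2_j_alg lam a : subalg2 lam (j_alg a).
Proof.
  split.
  - exists (j_vec a), LE1. split; [|intro; reflexivity].
    intros al be E. split; [apply (f_equal c3) in E | apply (f_equal Defs.c1) in E];
      cbn in E; lra.
  - intros X Y [al [be ->]] [ga [de ->]]. exists 0, (lam * (al * de - ga * be)).
    apply lvec_eq; cbn; ring.
Qed.

Lemma k_alg_abelian lam : abelian_sub lam k_alg.
Proof. intros X Y [a [b ->]] [c [d ->]]. apply lbr_horizontal; cbn; ring. Qed.

Lemma j_alg_abelian_lam0 a : abelian_sub 0 (j_alg a).
Proof. intros X Y [al [be ->]] [ga [de ->]]. apply lvec_eq; cbn; ring. Qed.

Lemma j_alg_not_abelian lam a : lam <> 0 -> ~ abelian_sub lam (j_alg a).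
Proof.
  intros Hl Hab.
  assert (E := Hab (j_vec a) LE1 ltac:(exists 1, 0; apply lvec_eq; cbn; ring)
                                 ltac:(exists 0, 1; apply lvec_eq; cbn; ring)).
  apply (f_equal Defs.c1) in E. cbn in E. apply Hl. lra.
Qed.

Lemma conn_lie_subgroup2_k_alg lam : conn_lie_subgroup2 lam k_alg K0.
Proof.
  split; [apply subalg2_k_alg|].
  intro p. symmetry. apply integral_subgroup_k_alg.
Qed.

Lemma conn_lie_subgroup2_j_alg lam a : conn_lie_subgroup2 lam (j_alg a) (Jset lam a).
Proof.
  split; [apply subalg2_j_alg|].
  intro p. symmetry. apply integral_subgroup_j_alg.
Qed.

Theorem mainTheorem2 (lam : R) :
  (* every 2-dim connected Lie subgroup is one of the listed ones *)
  (forall (h : lvec -> Prop) (H : pset), conn_lie_subgroup2 lam h H ->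
     (same_sub h (span2 LE1 LE2) /\ same_set H K0) \/
     (exists a : R, same_sub h (span2 (ladd LE3 (lscal a LE2)) LE1) /\
                    same_set H (Jset lam a))) /\
  (* (i) *)
  conn_lie_subgroup2 lam (span2 LE1 LE2) K0 /\
  abelian_sub lam (span2 LE1 LE2) /\
  (* (ii) *)
  (lam <> 0 -> forall a : R,
     conn_lie_subgroup2 lam (span2 (ladd LE3 (lscal a LE2)) LE1) (Jset lam a) /\
     solvable_sub lam (span2 (ladd LE3 (lscal a LE2)) LE1) /\
     ~ abelian_sub lam (span2 (ladd LE3 (lscal a LE2)) LE1)) /\
  (* (iii) *)
  (lam = 0 -> forall a : R,
     conn_lie_subgroup2 lam (span2 (ladd LE3 (lscal a LE2)) LE1) (Jset lam a) /\
     abelian_sub lam (span2 (ladd LE3 (lscal a LE2)) LE1)).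
Proof.
  split; [|split; [|split; [|split]]].
  - intros h H [Hh HH].
    destruct (subalg2_classification lam h Hh) as [Hk|[a Ha]]; [left | right; exists a];
      split; auto; apply (same_set_trans _ _ _ HH).
    + apply (same_set_trans _ _ _ (integral_subgroup_same_sub lam _ _ Hk)).
      apply integral_subgroup_k_alg.
    + apply (same_set_trans _ _ _ (integral_subgroup_same_sub lam _ _ Ha)).
      apply integral_subgroup_j_alg.
  - apply conn_lie_subgroup2_k_alg.
  - apply k_alg_abelian.
  - intros Hl a. split; [|split].
    + apply conn_lie_subgroup2_j_alg.
    + intros X Y Z W _ _ _ _. apply lbr_lbr_lbr_eq0.
    + apply j_alg_not_abelian, Hl.
  - intros -> a. split; [apply conn_lie_subgroup2_j_alg | apply j_alg_abelian_lam0].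
Qed.
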